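(* Let $\{P^{[s,t]}_{ij,k}\}$, with initial point $x^{(0)}\in S$, be a discrete time quadratic stochastic process of type (A) or of type (B). Suppose there exist $k_0\in\mathbb{N}$ and a sequence $(\lambda_n)_{n\ge1}$ with $0<\lambda_n<1$, satisfying $\sum_n\lambda_n=\infty$ and $\sum_{j=1}^n\frac{\prod_{k=1}^n(1-\lambda_k)}{1-\lambda_j}\to0$ as $n\to\infty$, such that $P^{[n-1,n]}_{ij,k_0}\ge\lambda_n$ for all $i,j\in\mathbb{N}$ and all $n\ge1$. Then the q.s.p. satisfies the ergodic principle, i.e. $\lim_{n\to\infty}|P^{[m,n]}_{ij,k}-P^{[m,n]}_{uv,k}|=0$ for all $i,j,u,v,k,m$.
   Context: $\mathbb{N}=\{1,2,\dots\}$; times are nonnegative integers. $\ell^1$ is the space of real sequences $x=(x_n)_{n\in\mathbb{N}}$ with $\|x\|_1=\sum_n|x_n|<\infty$, and $S=\{x\in\ell^1:x_n\ge0,\ \|x\|_1=1\}$. A discrete time quadratic stochastic process (q.s.p.) consists of an initial point $x^{(0)}\in S$ and numbers $P^{[s,t]}_{ij,k}$ ($i,j,k\in\mathbb{N}$; $s,t$ nonnegative integers with $t-s\ge1$) such that for all $s,t$: (1) $P^{[s,t]}_{ij,k}=P^{[s,t]}_{ji,k}$; (2) $P^{[s,t]}_{ij,k}\ge0$ and $\sum_{k}P^{[s,t]}_{ij,k}=1$; and (3) one of the following holds for all $s<r<t$: type (A): $P^{[s,t]}_{ij,k}=\sum_{m,l}P^{[s,r]}_{ij,m}P^{[r,t]}_{ml,k}x^{(r)}_l$;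 type (B): $P^{[s,t]}_{ij,k}=\sum_{m,l,g,h}P^{[s,r]}_{im,l}P^{[s,r]}_{jg,h}P^{[r,t]}_{lh,k}x^{(s)}_mx^{(s)}_g$. Here for $r\ge1$, $x^{(r)}_k=\sum_{i,j}P^{[0,r]}_{ij,k}x^{(0)}_ix^{(0)}_j$. *)

From Stdlib Require Import Reals.
From Coquelicot Require Import Coquelicot.
Open Scope R_scope.

(* Indices i,j,k in N = {1,2,...} are encoded by nat via the shift i |-> i-1
   (so index 0 : nat stands for the mathematical index 1). Times are nat. *)

(* P s t i j k  stands for  P^{[s,t]}_{ij,k}; meaningful only when s < t. *)
Definition qsp_coeffs := nat -> nat -> nat -> nat -> nat -> R.

Definition in_simplex (x : nat -> R) : Prop :=
  (forall k, 0 <= x k) /\ is_series x 1.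

(* x^{(r)}: the initial point for r = 0, and
   x^{(r)}_k = sum_{i,j} P^{[0,r]}_{ij,k} x^{(0)}_i x^{(0)}_j for r >= 1.
   (All terms are nonnegative and the double series converges under the
   q.s.p. axioms, so the iterated Series is the double sum.) *)
Definition xr (P : qsp_coeffs) (x0 : nat -> R) (r : nat) (k : nat) : R :=
  match r with
  | O => x0 k
  | S _ => Series (fun i => Series (fun j => P 0%nat r i j k * x0 i * x0 j))
  end.

Definition qsp_basic (P : qsp_coeffs) : Prop :=
  forall s t : nat, (s < t)%nat ->
    (forall i j k, P s t i j k = P s t j i k) /\
    (forall i j k, 0 <= P s t i j k) /\
    (forall i j, is_series (fun k => P s t i j k) 1).

Definition qsp_typeA (P : qsp_coeffs) (x0 : nat -> R) : Prop :=
  forall s r t : nat, (s < r)%nat -> (r < t)%nat ->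
    forall i j k,
      P s t i j k =
      Series (fun m => Series (fun l =>
        P s r i j m * P r t m l k * xr P x0 r l)).

Definition qsp_typeB (P : qsp_coeffs) (x0 : nat -> R) : Prop :=
  forall s r t : nat, (s < r)%nat -> (r < t)%nat ->
    forall i j k,
      P s t i j k =
      Series (fun m => Series (fun l => Series (fun g => Series (fun h =>
        P s r i m l * P s r j g h * P r t l h k * xr P x0 s m * xr P x0 s g)))).

Definition is_qsp_A (P : qsp_coeffs) (x0 : nat -> R) : Prop :=
  in_simplex x0 /\ qsp_basic P /\ qsp_typeA P x0.
Definition is_qsp_B (P : qsp_coeffs) (x0 : nat -> R) : Prop :=
  in_simplex x0 /\ qsp_basic P /\ qsp_typeB P x0.

Fixpoint prod1 (f : nat -> R) (n : nat) : R :=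
  match n with
  | O => 1
  | S n' => prod1 f n' * f n
  end.

Definition ergodic_principle (P : qsp_coeffs) : Prop :=
  forall i j u v k m : nat,
    is_lim_seq (fun n => Rabs (P m n i j k - P m n u v k)) 0.

From Pilot Require Import Defs.
From Stdlib Require Import Reals Lra Lia.
From Coquelicot Require Import Coquelicot.
Open Scope R_scope.

(* Whatever the parents, the one-step kernel [P^[n-1,n]] gives the type [k0] mass at least
   [lam n].  By Dobrushin's argument, prepending such a step through the Chapman-Kolmogorov
   equation therefore shrinks the spread of [P^[m,n]_{ij,k}] over the parents by the factor
   [1 - lam n].  For type (B) the equation factors through the averaged kernel
   [sum_g x_g P_{ig,l}], so the contraction acts on one parent at a time and the symmetry of
   [P] combines the two.  The spread is thus at most [2 prod_{k=m+1}^{n-1} (1 - lam k)], and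
   [prod (1 - lam k) * (1 + sum lam k) <= 1] sends it to zero when [sum lam] diverges. *)

Lemma sum_n_nondecr (a : nat -> R) (N M : nat) :
  (forall n, 0 <= a n) -> (N <= M)%nat -> sum_n a N <= sum_n a M.
Proof.
  intros Ha HNM; induction HNM as [|M _ IH]; [lra|].
  rewrite sum_Sn; unfold plus; simpl; specialize (Ha (S M)); lra.
Qed.

Lemma sum_n_nonneg (a : nat -> R) (N : nat) : (forall n, 0 <= a n) -> 0 <= sum_n a N.
Proof.
  intro Ha; apply Rle_trans with (sum_n a 0).
  - rewrite sum_O; apply Ha.
  - apply sum_n_nondecr; [exact Ha | lia].
Qed.

Lemma sum_n_le_Series (a : nat -> R) (N : nat) :
  (forall n, 0 <= a n) -> ex_series a -> sum_n a N <= Series a.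
Proof.
  intros Ha Hex.
  apply (is_lim_seq_le_loc (fun _ => sum_n a N) (sum_n a) (sum_n a N) (Series a)).
  - exists N; intros n Hn; now apply sum_n_nondecr.
  - apply is_lim_seq_const.
  - apply Series_correct, Hex.
Qed.

Lemma term_le_Series (a : nat -> R) (k : nat) :
  (forall n, 0 <= a n) -> ex_series a -> a k <= Series a.
Proof.
  intros Ha Hex; apply Rle_trans with (sum_n a k); [|now apply sum_n_le_Series].
  destruct k as [|k]; [rewrite sum_O; lra|].
  rewrite sum_Sn; unfold plus; simpl.
  pose proof (sum_n_nonneg a k Ha); lra.
Qed.

Lemma Series_nonneg (a : nat -> R) : (forall n, 0 <= a n) -> ex_series a -> 0 <= Series a.
Proof. intros Ha Hex; apply Rle_trans with (a 0%nat); [apply Ha | now apply term_le_Series]. Qed.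

Lemma ex_series_nonneg_le (a b : nat -> R) :
  (forall n, 0 <= a n <= b n) -> ex_series b -> ex_series a.
Proof.
  intro Hab; apply (ex_series_le a b); intro n; specialize (Hab n).
  unfold norm; simpl; unfold abs; simpl; rewrite Rabs_right; lra.
Qed.

Lemma Series_le_of_sum_n_le (a : nat -> R) (B : R) :
  (forall n, 0 <= a n) -> (forall N, sum_n a N <= B) -> ex_series a /\ Series a <= B.
Proof.
  intros Ha HB.
  destruct (ex_finite_lim_seq_incr (sum_n a) B) as [l Hl]; [|exact HB|].
  { intro n; apply sum_n_nondecr; [exact Ha | lia]. }
  rewrite (is_series_unique a l Hl); split; [now exists l|].
  apply (is_lim_seq_le (sum_n a) (fun _ => B) l B); [exact HB | exact Hl | apply is_lim_seq_const].
Qed.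

Lemma is_series_sum_n (f : nat -> nat -> R) (N : nat) :
  (forall m, ex_series (f m)) ->
  is_series (fun h => sum_n (fun m => f m h) N) (sum_n (fun m => Series (f m)) N).
Proof.
  intro Hf; induction N as [|N IH].
  - rewrite sum_O; apply (is_series_ext (f 0%nat)); [intro; now rewrite sum_O|].
    apply Series_correct, Hf.
  - rewrite sum_Sn; apply (is_series_ext (fun h => plus (sum_n (fun m => f m h) N) (f (S N) h))).
    { intro h; now rewrite sum_Sn. }
    apply (is_series_plus (V := R_NormedModule)); [exact IH | apply Series_correct, Hf].
Qed.

Lemma is_series_Series_swap (f : nat -> nat -> R) :
  (forall m h, 0 <= f m h) -> (forall m, ex_series (f m)) -> ex_series (fun m => Series (f m)) ->
  is_series (fun h => Series (fun m => f m h)) (Series (fun m => Series (f m))).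
Proof.
  intros Hf Hrow Htot.
  assert (Hrow0 : forall m, 0 <= Series (f m)) by (intro m; now apply Series_nonneg).
  assert (Hcol : forall h, ex_series (fun m => f m h)).
  { intro h; apply (ex_series_nonneg_le _ (fun m => Series (f m))); [|exact Htot].
    intro m; split; [apply Hf | now apply term_le_Series]. }
  assert (Hcol0 : forall h, 0 <= Series (fun m => f m h)) by (intro h; now apply Series_nonneg).
  destruct (Series_le_of_sum_n_le (fun h => Series (fun m => f m h))
              (Series (fun m => Series (f m)))) as [Hex Hle]; [exact Hcol0| |].
  { intro N; rewrite <- (is_series_unique _ _ (is_series_sum_n (fun h m => f m h) N Hcol)).
    apply Series_le; [|exact Htot]; intro m; split.
    - now apply sum_n_nonneg.
    - now apply sum_n_le_Series. }
  destruct (Series_le_of_sum_n_le (fun m => Series (f m))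
              (Series (fun h => Series (fun m => f m h)))) as [_ Hge]; [exact Hrow0| |].
  { intro N; rewrite <- (is_series_unique _ _ (is_series_sum_n f N Hrow)).
    apply Series_le; [|exact Hex]; intro h; split.
    - apply sum_n_nonneg; intro m; apply Hf.
    - apply (sum_n_le_Series (fun m => f m h)); [intro m; apply Hf | apply Hcol]. }
  replace (Series (fun m => Series (f m))) with (Series (fun h => Series (fun m => f m h))) by lra.
  now apply Series_correct.
Qed.

Lemma in_simplex_Series (p : nat -> R) : in_simplex p -> Series p = 1.
Proof. intros [_ Hp]; now apply is_series_unique. Qed.

Lemma in_simplex_le_1 (p : nat -> R) (k : nat) : in_simplex p -> p k <= 1.
Proof.
  intros Hp; rewrite <- (in_simplex_Series p Hp).
  apply term_le_Series; [apply Hp | exists 1; apply Hp].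
Qed.

Lemma weighted_Series_bounds (x f : nat -> R) (A B : R) :
  in_simplex x -> 0 <= A -> (forall l, A <= f l <= B) ->
  ex_series (fun l => x l * f l) /\ A <= Series (fun l => x l * f l) <= B.
Proof.
  intros Hx HA Hf.
  assert (Hx0 : forall l, 0 <= x l) by apply Hx.
  assert (Hex : ex_series x) by (exists 1; apply Hx).
  assert (Hle : forall l, 0 <= x l * A <= x l * f l /\ x l * f l <= x l * B).
  { intro l; specialize (Hf l); specialize (Hx0 l); repeat split; nra. }
  assert (Hexf : ex_series (fun l => x l * f l)).
  { apply (ex_series_nonneg_le _ (fun l => x l * B)); [|now apply ex_series_scal_r].
    intro l; split; [apply Rle_trans with (x l * A)|]; apply Hle. }
  split; [exact Hexf | split].
  - replace A with (Series (fun l => x l * A))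
      by (rewrite Series_scal_r, (in_simplex_Series x Hx); ring).
    apply Series_le; [apply Hle | exact Hexf].
  - replace B with (Series (fun l => x l * B))
      by (rewrite Series_scal_r, (in_simplex_Series x Hx); ring).
    apply Series_le; [|now apply ex_series_scal_r].
    intro l; split; [apply Rle_trans with (x l * A)|]; apply Hle.
Qed.

Lemma weighted_Series_diff_le (x f g : nat -> R) (D : R) :
  in_simplex x -> (forall l, 0 <= f l <= 1) -> (forall l, 0 <= g l <= 1) ->
  (forall l, Rabs (f l - g l) <= D) ->
  Rabs (Series (fun l => x l * f l) - Series (fun l => x l * g l)) <= D.
Proof.
  intros Hx Hf Hg Hfg.
  destruct (weighted_Series_bounds x f 0 1 Hx (Rle_refl 0) Hf) as [Ef _].
  destruct (weighted_Series_bounds x g 0 1 Hx (Rle_refl 0) Hg) as [Eg _].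
  destruct (weighted_Series_bounds x (fun l => Rabs (f l - g l)) 0 D Hx (Rle_refl 0))
    as [Ed Hd].
  { intro l; split; [apply Rabs_pos | apply Hfg]. }
  assert (Habs : forall l, Rabs (x l * f l - x l * g l) = x l * Rabs (f l - g l)).
  { intro l; rewrite <- Rmult_minus_distr_l, Rabs_mult, Rabs_right; [easy | apply Rle_ge, Hx]. }
  rewrite <- (Series_ext _ _ Habs) in Hd.
  rewrite <- Series_minus by assumption.
  eapply Rle_trans; [apply Series_Rabs | apply Hd].
  eapply ex_series_ext; [intro l; symmetry; apply Habs | exact Ed].
Qed.

Lemma weighted_Series_bounds_at (p G : nat -> R) (c D : R) (k0 : nat) :
  in_simplex p -> c <= p k0 -> (forall a, 0 <= G a <= D) ->
  c * G k0 <= Series (fun a => p a * G a) <= D - c * (D - G k0).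
Proof.
  intros Hp Hc HG.
  assert (Hbelow : forall H : nat -> R, (forall a, 0 <= H a <= D) ->
            ex_series (fun a => p a * H a) /\ c * H k0 <= Series (fun a => p a * H a)).
  { intros H HH.
    destruct (weighted_Series_bounds p H 0 D Hp (Rle_refl 0) HH) as [Ex _].
    split; [exact Ex|].
    assert (Hpos : forall a, 0 <= p a * H a)
      by (intro a; apply Rmult_le_pos; [apply Hp | apply HH]).
    apply Rle_trans with (p k0 * H k0); [apply Rmult_le_compat_r; [apply HH | exact Hc]|].
    now apply (term_le_Series (fun a => p a * H a)). }
  destruct (Hbelow G HG) as [ExG HlowG].
  destruct (Hbelow (fun a => D - G a)) as [_ HlowC]; [intro a; specialize (HG a); lra|].
  split; [exact HlowG|].
  replace (Series (fun a => p a * (D - G a))) with (D - Series (fun a => p a * G a)) in HlowC.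
  { lra. }
  rewrite (Series_ext (fun a => p a * (D - G a)) (fun a => p a * D - p a * G a)) by (intro; ring).
  rewrite Series_minus, Series_scal_r, (in_simplex_Series p Hp); [ring | |exact ExG].
  apply ex_series_scal_r; exists 1; apply Hp.
Qed.

(* Dobrushin's contraction: the common mass [c] at [k0] cancels, so only [1 - c] of each
   distribution sees the oscillation [D] of [F]. *)
Lemma weighted_Series_contraction (p q F : nat -> R) (c D : R) (k0 : nat) :
  in_simplex p -> in_simplex q -> c <= p k0 -> c <= q k0 ->
  (forall a b, Rabs (F a - F b) <= D) ->
  Rabs (Series (fun a => p a * F a) - Series (fun a => q a * F a)) <= (1 - c) * D.
Proof.
  intros Hp Hq Hcp Hcq HF.
  destruct (completeness (fun y => exists a, y = F a)) as [U [HUub HUlub]].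
  { exists (F 0%nat + D); intros y [a ->].
    specialize (HF a 0%nat); apply Rabs_le_between' in HF; lra. }
  { exists (F 0%nat), 0%nat; reflexivity. }
  set (G := fun a => F a - (U - D)).
  assert (HG : forall a, 0 <= G a <= D).
  { intro a; unfold G; split.
    - enough (U <= F a + D) by lra.
      apply HUlub; intros y [b ->]; specialize (HF b a); apply Rabs_le_between' in HF; lra.
    - enough (F a <= U) by lra. apply HUub; now exists a. }
  assert (Hshift : forall r, in_simplex r ->
            Series (fun a => r a * F a) = Series (fun a => r a * G a) + (U - D)).
  { intros r Hr.
    destruct (weighted_Series_bounds r G 0 D Hr (Rle_refl 0) HG) as [ExG _].
    rewrite (Series_ext _ (fun a => r a * G a + r a * (U - D))) by (intro a; unfold G; ring).
    rewrite Series_plus, Series_scal_r, (in_simplex_Series r Hr); [ring | exact ExG |].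
    apply ex_series_scal_r; exists 1; apply Hr. }
  rewrite (Hshift p Hp), (Hshift q Hq).
  pose proof (weighted_Series_bounds_at p G c D k0 Hp Hcp HG).
  pose proof (weighted_Series_bounds_at q G c D k0 Hq Hcq HG).
  apply Rabs_le; lra.
Qed.

Lemma is_series_mixture (w : nat -> R) (p : nat -> nat -> R) (F : nat -> R) (B : R) :
  in_simplex w -> (forall i, in_simplex (p i)) -> (forall k, 0 <= F k <= B) ->
  is_series (fun k => Series (fun i => w i * p i k) * F k)
            (Series (fun i => w i * Series (fun k => p i k * F k))).
Proof.
  intros Hw Hp HF.
  assert (Hrow : forall i, ex_series (fun k => p i k * F k) /\
                           0 <= Series (fun k => p i k * F k) <= B)
    by (intro i; apply (weighted_Series_bounds (p i) F 0 B (Hp i) (Rle_refl 0) HF)).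
  apply (is_series_ext (fun k => Series (fun i => w i * (p i k * F k)))).
  { intro k; rewrite <- Series_scal_r; apply Series_ext; intro i; ring. }
  rewrite (Series_ext _ (fun i => Series (fun k => w i * (p i k * F k))))
    by (intro i; now rewrite Series_scal_l).
  apply is_series_Series_swap.
  - intros i k; apply Rmult_le_pos; [apply Hw|apply Rmult_le_pos; [apply Hp|apply HF]].
  - intro i; apply (ex_series_scal_l (V := R_NormedModule)), Hrow.
  - eapply ex_series_ext; [intro i; symmetry; apply Series_scal_l|].
    apply (weighted_Series_bounds w _ 0 B Hw (Rle_refl 0)), Hrow.
Qed.

Lemma mixture_in_simplex (w : nat -> R) (p : nat -> nat -> R) :
  in_simplex w -> (forall i, in_simplex (p i)) ->
  in_simplex (fun k => Series (fun i => w i * p i k)).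
Proof.
  intros Hw Hp; split.
  - intro k; apply (weighted_Series_bounds w (fun i => p i k) 0 1 Hw (Rle_refl 0)).
    intro i; split; [apply Hp | apply in_simplex_le_1, Hp].
  - pose proof (is_series_mixture w p (fun _ => 1) 1 Hw Hp) as Hmix.
    rewrite (Series_ext _ w) in Hmix
      by (intro i; rewrite (Series_ext _ (p i)), (in_simplex_Series _ (Hp i)) by (intro; ring);
          ring).
    rewrite (in_simplex_Series w Hw) in Hmix.
    eapply is_series_ext; [|apply Hmix; intro; lra]; intro k; simpl; ring.
Qed.

Lemma prod1_one_minus_bounds (a : nat -> R) (n : nat) :
  (forall k, (1 <= k)%nat -> 0 <= a k <= 1) ->
  0 <= prod1 (fun k => 1 - a k) n <= / (1 + sum_n_m a 1 n).
Proof.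
  intro Ha.
  enough (Hinv : 0 <= sum_n_m a 1 n /\ 0 <= prod1 (fun k => 1 - a k) n /\
                 prod1 (fun k => 1 - a k) n * (1 + sum_n_m a 1 n) <= 1).
  { destruct Hinv as [Hs [Hp Hps]]; split; [exact Hp|].
    apply (Rmult_le_reg_r (1 + sum_n_m a 1 n)); [lra|].
    rewrite Rinv_l; lra. }
  induction n as [|n [Hs [Hp Hps]]].
  - rewrite sum_n_m_zero by lia; simpl; unfold zero; simpl; lra.
  - rewrite sum_n_Sm by lia; unfold plus; simpl.
    specialize (Ha (S n) ltac:(lia)).
    set (p := prod1 (fun k => 1 - a k) n) in *; set (s := sum_n_m a 1 n) in *.
    assert (0 <= p * (a (S n) * (s + a (S n)))) by (apply Rmult_le_pos; nra).
    repeat split; nra.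
Qed.

Lemma prod1_one_minus_lim (a : nat -> R) :
  (forall k, (1 <= k)%nat -> 0 <= a k <= 1) ->
  is_lim_seq (fun n => sum_n_m a 1 n) p_infty ->
  is_lim_seq (prod1 (fun k => 1 - a k)) 0.
Proof.
  intros Ha Hdiv.
  apply (is_lim_seq_le_le (fun _ => 0) _ (fun n => / (1 + sum_n_m a 1 n))).
  - intro n; now apply prod1_one_minus_bounds.
  - apply is_lim_seq_const.
  - replace (Finite 0) with (Rbar_inv p_infty) by reflexivity.
    apply is_lim_seq_inv; [|discriminate].
    eapply is_lim_seq_plus; [apply is_lim_seq_const | exact Hdiv | reflexivity].
Qed.

Lemma sum_n_m_tail_diverges (a : nat -> R) (m : nat) :
  is_lim_seq (fun n => sum_n_m a 1 n) p_infty ->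
  is_lim_seq (fun d => sum_n_m (fun k => a (m + k)%nat) 1 d) p_infty.
Proof.
  intro Hdiv.
  assert (Htail : forall d, sum_n_m (fun k => a (m + k)%nat) 1 d
                            = sum_n_m a 1 (d + m) - sum_n_m a 1 m).
  { induction d as [|d IH].
    - rewrite sum_n_m_zero by lia; unfold zero; simpl; ring.
    - rewrite sum_n_Sm, IH by lia; simpl; rewrite sum_n_Sm by lia; unfold plus; simpl.
      replace (m + S d)%nat with (S (d + m)) by lia; ring. }
  apply (is_lim_seq_ext (fun d => sum_n_m a 1 (d + m) + - sum_n_m a 1 m));
    [intro d; rewrite Htail; ring|].
  apply (is_lim_seq_plus _ _ p_infty (- sum_n_m a 1 m)); [| apply is_lim_seq_const | reflexivity].
  apply (is_lim_seq_incr_n (fun n => sum_n_m a 1 n) m p_infty), Hdiv.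
Qed.

Lemma prod1_shift (f : nat -> R) (m d : nat) :
  prod1 (fun n => f (m + n)%nat) (S d) = f (S m) * prod1 (fun n => f (S m + n)%nat) d.
Proof.
  induction d as [|d IH]; simpl in *.
  - rewrite Nat.add_1_r; ring.
  - rewrite IH; replace (m + S (S d))%nat with (S (m + S d)) by lia; ring.
Qed.

Section QuadraticProcess.

Variables (P : qsp_coeffs) (x0 : nat -> R).
Hypotheses (Hx0 : in_simplex x0) (HP : qsp_basic P).

Lemma qsp_row_in_simplex (s t i j : nat) : (s < t)%nat -> in_simplex (P s t i j).
Proof. intro Hst; destruct (HP s t Hst) as [_ [H0 H1]]; split; [apply H0 | apply H1]. Qed.

Lemma qsp_entry_bounds (s t i j k : nat) : (s < t)%nat -> 0 <= P s t i j k <= 1.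
Proof.
  intro Hst; pose proof (qsp_row_in_simplex s t i j Hst) as Hrow.
  split; [apply Hrow | now apply in_simplex_le_1].
Qed.

Lemma qsp_entry_diff_le_1 (s t i j u v k : nat) :
  (s < t)%nat -> Rabs (P s t i j k - P s t u v k) <= 1.
Proof.
  intro Hst; pose proof (qsp_entry_bounds s t i j k Hst).
  pose proof (qsp_entry_bounds s t u v k Hst).
  apply Rabs_le; lra.
Qed.

Lemma xr_in_simplex (r : nat) : in_simplex (Defs.xr P x0 r).
Proof.
  destruct r as [|r]; [exact Hx0|].
  assert (Hxr : forall k, Defs.xr P x0 (S r) k =
            Series (fun i => x0 i * Series (fun j => x0 j * P 0%nat (S r) i j k))).
  { intro k; simpl; apply Series_ext; intro i.
    rewrite <- Series_scal_l; apply Series_ext; intro j; ring. }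
  assert (Hinner : forall i, in_simplex (fun k => Series (fun j => x0 j * P 0%nat (S r) i j k))).
  { intro i; apply (mixture_in_simplex x0 (P 0%nat (S r) i) Hx0).
    intro j; apply qsp_row_in_simplex; lia. }
  destruct (mixture_in_simplex x0 _ Hx0 Hinner) as [H0 H1].
  split; [intro k; rewrite Hxr; apply H0|].
  eapply is_series_ext; [intro k; symmetry; apply Hxr | exact H1].
Qed.

Lemma typeA_contraction (s r t k k0 : nat) (c D : R) :
  qsp_typeA P x0 -> (s < r)%nat -> (r < t)%nat ->
  (forall i j, c <= P s r i j k0) ->
  (forall a b l, Rabs (P r t a l k - P r t b l k) <= D) ->
  forall i j u v, Rabs (P s t i j k - P s t u v k) <= (1 - c) * D.
Proof.
  intros HA Hsr Hrt Hc HD i j u v.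
  set (x := Defs.xr P x0 r).
  set (F := fun a => Series (fun l => x l * P r t a l k)).
  assert (Hdec : forall i j, P s t i j k = Series (fun a => P s r i j a * F a)).
  { intros i' j'; rewrite (HA s r t Hsr Hrt); apply Series_ext; intro a.
    unfold F; rewrite <- Series_scal_l; apply Series_ext; intro l; unfold x; ring. }
  rewrite !Hdec.
  apply (weighted_Series_contraction _ _ _ c D k0);
    [now apply qsp_row_in_simplex | now apply qsp_row_in_simplex | apply Hc | apply Hc |].
  intros a b; apply weighted_Series_diff_le; [apply xr_in_simplex | | |].
  - intro l; now apply qsp_entry_bounds.
  - intro l; now apply qsp_entry_bounds.
  - intro l; apply HD.
Qed.

(* The distribution at time [r] of the offspring of type [i] and a partner drawn from [x^(s)]. *)
Definition partner_average (s r i l : nat) : R :=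
  Series (fun g => Defs.xr P x0 s g * P s r i g l).

Lemma partner_average_in_simplex (s r i : nat) :
  (s < r)%nat -> in_simplex (partner_average s r i).
Proof.
  intro Hsr; apply (mixture_in_simplex _ (P s r i)); [apply xr_in_simplex|].
  intro g; now apply qsp_row_in_simplex.
Qed.

Lemma typeB_decomposition (s r t i j k : nat) :
  qsp_typeB P x0 -> (s < r)%nat -> (r < t)%nat ->
  P s t i j k = Series (fun l => partner_average s r i l *
                                 Series (fun h => partner_average s r j h * P r t l h k)).
Proof.
  intros HB Hsr Hrt.
  set (x := Defs.xr P x0 s).
  set (G := fun l => Series (fun h => partner_average s r j h * P r t l h k)).
  assert (HG : forall l, 0 <= G l <= 1).
  { intro l; apply (weighted_Series_bounds _ _ 0 1 (partner_average_in_simplex s r j Hsr)).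
    { apply Rle_refl. }
    intro h; now apply qsp_entry_bounds. }
  assert (Hinner : forall l,
            Series (fun g => x g * Series (fun h => P s r j g h * P r t l h k)) = G l).
  { intro l; symmetry; apply is_series_unique.
    apply (is_series_mixture x (P s r j) (fun h => P r t l h k) 1); [apply xr_in_simplex | |].
    - intro g; now apply qsp_row_in_simplex.
    - intro h; now apply qsp_entry_bounds. }
  rewrite (HB s r t Hsr Hrt).
  transitivity (Series (fun m => x m * Series (fun l => P s r i m l * G l))).
  { apply Series_ext; intro m; rewrite <- Series_scal_l; apply Series_ext; intro l.
    rewrite <- Hinner, <- !Series_scal_l; apply Series_ext; intro g.
    rewrite <- !Series_scal_l; apply Series_ext; intro h; unfold x; ring. }
  symmetry; apply is_series_unique.
  apply (is_series_mixture x (P s r i) G 1); [apply xr_in_simplex | | exact HG].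
  intro m; now apply qsp_row_in_simplex.
Qed.

Lemma typeB_contraction (s r t k k0 : nat) (c D : R) :
  qsp_typeB P x0 -> (s < r)%nat -> (r < t)%nat -> 0 <= c ->
  (forall i j, c <= P s r i j k0) ->
  (forall l h h', Rabs (P r t l h k - P r t l h' k) <= D) ->
  forall i j v, Rabs (P s t i j k - P s t i v k) <= (1 - c) * D.
Proof.
  intros HB Hsr Hrt Hc0 Hc HD i j v.
  assert (Havg : forall i, in_simplex (partner_average s r i))
    by (intro; now apply partner_average_in_simplex).
  assert (Hk0 : forall j, c <= partner_average s r j k0).
  { intro j'; apply (weighted_Series_bounds _ (fun g => P s r j' g k0) c 1 (xr_in_simplex s));
      [exact Hc0|].
    intro g; split; [apply Hc | now apply qsp_entry_bounds]. }
  assert (HG : forall j l, 0 <= Series (fun h => partner_average s r j h * P r t l h k) <= 1).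
  { intros j' l; apply (weighted_Series_bounds _ _ 0 1 (Havg j') (Rle_refl 0)).
    intro h; now apply qsp_entry_bounds. }
  rewrite !(typeB_decomposition s r t i _ k HB Hsr Hrt).
  apply weighted_Series_diff_le; [apply Havg | apply HG | apply HG |].
  intro l; apply (weighted_Series_contraction _ _ _ c D k0);
    [apply Havg | apply Havg | apply Hk0 | apply Hk0 |].
  intros h h'; apply HD.
Qed.

Variables (lam : nat -> R) (k0 : nat).
Hypothesis Hlow : forall m i j, 0 <= lam (S m) <= P m (S m) i j k0.

Lemma typeA_osc_le (k : nat) : qsp_typeA P x0 ->
  forall d m i j u v, Rabs (P m (S m + d)%nat i j k - P m (S m + d)%nat u v k)
                      <= prod1 (fun n => 1 - lam (m + n)%nat) d.
Proof.
  intros HA d; induction d as [|d IH]; intros m i j u v.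
  - apply qsp_entry_diff_le_1; lia.
  - rewrite (prod1_shift (fun n => 1 - lam n)).
    apply (typeA_contraction m (S m) _ k k0);
      [exact HA | lia | lia | intros i' j'; apply Hlow |].
    intros a b l; replace (S m + S d)%nat with (S (S m) + d)%nat by lia; apply IH.
Qed.

Lemma typeB_osc_le_right (k : nat) : qsp_typeB P x0 ->
  forall d m i j v, Rabs (P m (S m + d)%nat i j k - P m (S m + d)%nat i v k)
                    <= prod1 (fun n => 1 - lam (m + n)%nat) d.
Proof.
  intros HB d; induction d as [|d IH]; intros m i j v.
  - apply qsp_entry_diff_le_1; lia.
  - rewrite (prod1_shift (fun n => 1 - lam n)).
    apply (typeB_contraction m (S m) _ k k0);
      [exact HB | lia | lia | apply (Hlow m 0 0) | intros i' j'; apply Hlow |].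
    intros l h h'; replace (S m + S d)%nat with (S (S m) + d)%nat by lia; apply IH.
Qed.

(* Varying one index at a time, with the symmetry [P_ij,k = P_ji,k] in between. *)
Lemma typeB_osc_le_both (k : nat) : qsp_typeB P x0 ->
  forall d m i j u v, Rabs (P m (S m + d)%nat i j k - P m (S m + d)%nat u v k)
                      <= 2 * prod1 (fun n => 1 - lam (m + n)%nat) d.
Proof.
  intros HB d m i j u v.
  set (t := (S m + d)%nat).
  destruct (HP m t ltac:(unfold t; lia)) as [Hsym _].
  pose proof (typeB_osc_le_right k HB d m i j v) as Hiv.
  pose proof (typeB_osc_le_right k HB d m v i u) as Hvu.
  fold t in Hiv, Hvu; rewrite (Hsym v i), (Hsym v u) in Hvu.
  replace (P m t i j k - P m t u v k)
    with ((P m t i j k - P m t i v k) + (P m t i v k - P m t u v k)) by ring.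
  eapply Rle_trans; [apply Rabs_triang | lra].
Qed.

End QuadraticProcess.

Lemma qsp_osc_le (P : qsp_coeffs) (x0 lam : nat -> R) (k0 : nat) :
  is_qsp_A P x0 \/ is_qsp_B P x0 ->
  (forall m i j, 0 <= lam (S m) <= P m (S m) i j k0) ->
  forall d m i j u v k, Rabs (P m (S m + d)%nat i j k - P m (S m + d)%nat u v k)
                        <= 2 * prod1 (fun n => 1 - lam (m + n)%nat) d.
Proof.
  intros [[Hx0 [HP HA]] | [Hx0 [HP HB]]] Hlow d m i j u v k.
  - pose proof (typeA_osc_le P x0 Hx0 HP lam k0 Hlow k HA d m i j u v).
    pose proof (Rabs_pos (P m (S m + d)%nat i j k - P m (S m + d)%nat u v k)); lra.
  - exact (typeB_osc_le_both P x0 Hx0 HP lam k0 Hlow k HB d m i j u v).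
Qed.

Theorem theorem3p4 (P : qsp_coeffs) (x0 : nat -> R) (k0 : nat) (lam : nat -> R) :
  (is_qsp_A P x0 \/ is_qsp_B P x0) ->
  (forall n : nat, (1 <= n)%nat -> 0 < lam n < 1) ->
  is_lim_seq (fun n => sum_n_m lam 1 n) p_infty ->
  is_lim_seq (fun n => sum_n_m (fun j => prod1 (fun k => 1 - lam k) n / (1 - lam j)) 1 n) 0 ->
  (forall n : nat, (1 <= n)%nat -> forall i j : nat, P (n - 1)%nat n i j k0 >= lam n) ->
  ergodic_principle P.
Proof.
  intros Hq Hlam Hdiv _ Hlb i j u v k m.
  assert (Hlow : forall n i j, 0 <= lam (S n) <= P n (S n) i j k0).
  { intros n i' j'; specialize (Hlb (S n) ltac:(lia) i' j').
    specialize (Hlam (S n) ltac:(lia)).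
    rewrite Nat.sub_succ, Nat.sub_0_r in Hlb; lra. }
  apply (is_lim_seq_incr_n _ (S m)).
  apply (is_lim_seq_le_le (fun _ => 0) _
           (fun d => 2 * prod1 (fun n => 1 - lam (m + n)%nat) d)).
  - intro d; split; [apply Rabs_pos|].
    rewrite Nat.add_comm; now apply (qsp_osc_le P x0 lam k0).
  - apply is_lim_seq_const.
  - replace (Finite 0) with (Rbar_mult 2 0) by (simpl; f_equal; ring).
    apply is_lim_seq_scal_l, prod1_one_minus_lim.
    + intros n Hn; specialize (Hlam (m + n)%nat ltac:(lia)); lra.
    + now apply sum_n_m_tail_diverges.
Qed.
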